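(* Let $S$ be an intra-regular $\Gamma$-AG$^{**}$-groupoid and $A\subseteq S$ nonempty with $A\Gamma A\subseteq A$. Then $A$ is a $\Gamma$-interior ideal of $S$ if and only if $(S\Gamma A)\Gamma S=A$.
   Context: Let $S$ and $\Gamma$ be nonempty sets with a map $S\times\Gamma\times S\to S$, $(x,\gamma,y)\mapsto x\gamma y$. $S$ is a $\Gamma$-AG-groupoid if $(x\gamma y)\delta z=(z\gamma y)\delta x$ for all $x,y,z\in S$, $\gamma,\delta\in\Gamma$; it is a $\Gamma$-AG$^{**}$-groupoid if moreover $a\alpha(b\beta c)=b\alpha(a\beta c)$ for all $a,b,c\in S$, $\alpha,\beta\in\Gamma$. For subsets $A,B\subseteq S$, $A\Gamma B=\{a\gamma b: a\in A,\gamma\in\Gamma,b\in B\}$. $S$ is intra-regular if for every $a\in S$ there exist $x,y\in S$ and $\beta,\gamma,\delta\in\Gamma$ with $a=(x\beta(a\delta a))\gamma y$. A nonempty subset $A$ with $A\Gamma A\subseteq A$ is a $\Gamma$-interior ideal if $(S\Gamma A)\Gamma S\subseteq A$. *)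

Section Gamma.
Context {S G : Type} (op : S -> G -> S -> S).

Definition is_GammaAG : Prop :=
  forall (x y z : S) (g d : G), op (op x g y) d z = op (op z g y) d x.

Definition is_GammaAGss : Prop :=
  is_GammaAG /\
  forall (a b c : S) (al be : G), op a al (op b be c) = op b al (op a be c).

Definition gprod (A B : S -> Prop) : S -> Prop :=
  fun s => exists a g b, A a /\ B b /\ s = op a g b.

Definition set_incl (A B : S -> Prop) : Prop := forall s, A s -> B s.
Definition set_eq (A B : S -> Prop) : Prop := forall s, A s <-> B s.

Definition intra_regular : Prop :=
  forall a : S, exists (x y : S) (be ga de : G),
    a = op (op x be (op a de a)) ga y.

Definition full : S -> Prop := fun _ => True.

Definition is_Gamma_interior_ideal (A : S -> Prop) : Prop :=
  (exists a, A a) /\ set_incl (gprod A A) A /\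
  set_incl (gprod (gprod full A) full) A.
End Gamma.


(* The reverse inclusion is the
   interior-ideal condition itself. *)

Section IntraRegular.
Context {S G : Type} (op : S -> G -> S -> S).

Lemma intra_regular_incl_interior (A : S -> Prop) :
  intra_regular op -> set_incl (gprod op A A) A ->
  set_incl A (gprod op (gprod op full A) full).
Proof.
  intros hIR hAA a Ha.
  destruct (hIR a) as (x & y & be & ga & de & Ea).
  assert (Haa : A (op a de a)) by (apply hAA; exists a, de, a; auto).
  exists (op x be (op a de a)), ga, y.
  repeat split; [| exact Ea].
  exists x, be, (op a de a). repeat split; exact Haa.
Qed.

End IntraRegular.

Theorem mainTheorem7 (S G : Type) (op : S -> G -> S -> S)
  (hS : inhabited S) (hG : inhabited G)
  (hAG : is_GammaAGss op) (hIR : intra_regular op)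
  (A : S -> Prop) (hA : exists a, A a) (hAA : set_incl (gprod op A A) A) :
  is_Gamma_interior_ideal op A <->
  set_eq (gprod op (gprod op (full (S:=S)) A) (full (S:=S))) A.
Proof.
  pose proof (intra_regular_incl_interior op A hIR hAA) as Hincl.
  split.
  - intros (_ & _ & Hideal) s. split; [apply Hideal | apply Hincl].
  - intros Heq. repeat split; [exact hA | exact hAA |].
    intros s Hs. apply Heq, Hs.
Qed.
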